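(* Let $C$ be a convex chain with endpoints $p$ and $q$. If $C$ is contained in the lune $L(p,q)$, then the stretch factor of $C$ is at most $\frac{2\pi}{3}$.
   Context: A chain is a sequence of points $p=c_1,\dots,c_m=q$ together with the segments $c_ic_{i+1}$; it is convex if the polygon $c_1c_2\cdots c_m$ is convex (the points are in convex position and appear in this cyclic order on their convex hull). $L(p,q)$ is the intersection of the two closed disks of radius $|pq|$ centered at $p$ and at $q$. The stretch factor of the chain is the smallest $t$ such that for any two vertices $u,v$ of $C$, the length of the sub-chain of $C$ between $u$ and $v$ is at most $t|uv|$. *)

From Stdlib Require Import Reals Lra.
Open Scope R_scope.

Definition point := (R * R)%type.

Definition dist (a b : point) : R :=
  sqrt ((fst a - fst b) ^ 2 + (snd a - snd b) ^ 2).

Definition orient (a b c : point) : R :=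
  (fst b - fst a) * (snd c - snd a) - (snd b - snd a) * (fst c - fst a).

(* A chain with m vertices c 0, ..., c (m-1); p = c 0, q = c (m-1).
   It is convex iff the polygon c 0 c 1 ... c (m-1) is convex, i.e. the
   points are in convex position and appear in this cyclic order on their
   hull: every triple of vertices taken in index order has the same
   (nonzero) orientation. *)
Definition convex_chain (m : nat) (c : nat -> point) : Prop :=
  (forall i j k, (i < j)%nat -> (j < k)%nat -> (k < m)%nat ->
     orient (c i) (c j) (c k) > 0) \/
  (forall i j k, (i < j)%nat -> (j < k)%nat -> (k < m)%nat ->
     orient (c i) (c j) (c k) < 0).

Definition in_lune (p q x : point) : Prop :=
  dist x p <= dist p q /\ dist x q <= dist p q.

Definition chain_in_lune (m : nat) (c : nat -> point) : Prop :=
  forall i t, (S i < m)%nat -> 0 <= t <= 1 ->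
    in_lune (c 0%nat) (c (m - 1)%nat)
      ((1 - t) * fst (c i) + t * fst (c (S i)),
       (1 - t) * snd (c i) + t * snd (c (S i))).

Fixpoint subchain_length (c : nat -> point) (i n : nat) : R :=
  match n with
  | O => 0
  | S n' => subchain_length c i n' + dist (c (i + n')%nat) (c (i + S n')%nat)
  end.

(* "The stretch factor of the chain is at most t": since the stretch factor is
   the smallest t with the property below (the set of such t is upward closed
   and closed), this is equivalent to t itself having the property. *)
Definition stretch_at_most (m : nat) (c : nat -> point) (t : R) : Prop :=
  forall i j, (i <= j)%nat -> (j < m)%nat ->
    subchain_length c i (j - i) <= t * dist (c i) (c j).

(* Normalize by a similarity so that p = (0,0), q = (1,0) and the chain turns
   clockwise: the vertices then lie in the upper half of the lune and the edge
   directions decrease along the chain.  For vertices c_i, c_j let phi be the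
   angle of c_i seen from p and psi the angle of c_j seen from q, so that every
   edge in between has its direction in [-psi, phi].

   If phi + psi <= 2PI/3, these edges make an angle at most PI/3 with the
   bisector, and the subchain is at most twice as long as its projection on it.

   Otherwise, up to exchanging p and q, the subchain is a convex polyline in the
   region bounded by the segment p c_i, arcs of two unit circles and the line
   q c_j (when phi < PI/3 the circle about q is replaced by the one about
   e(phi - PI/3)).  Summation by parts writes its length through increments of
   the support values of its vertices, which are dominated by those of the
   boundary of the region; the explicit bound obtained this way reduces to
   2PI/3 (1 - cos x) <= x on [0, PI/3]. *)

From Stdlib Require Import Reals Lra Lia Psatz.
(* After Reals, so that [dist] is Defs.dist and not Rlimit.dist. *)
From Pilot Require Import Defs.
Open Scope R_scope.

Lemma sin_cos_pow2 t : sin t ^ 2 + cos t ^ 2 = 1.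
Proof. pose proof (sin2_cos2 t) as E. unfold Rsqr in E. lra. Qed.

Lemma PI_gt_3 : 3 < PI.
Proof. pose proof PI2_3_2. lra. Qed.

Lemma sin_le_id x : 0 <= x -> sin x <= x.
Proof.
  intros Hx. destruct (Req_dec x 0) as [->|Hx0].
  - rewrite sin_0. lra.
  - left. apply sin_lt_x. lra.
Qed.

Lemma cos_ge_half x : -(PI/3) <= x <= PI/3 -> 1/2 <= cos x.
Proof.
  intros Hx. pose proof PI_RGT_0. rewrite <- cos_PI3.
  destruct (Rle_dec 0 x).
  - apply cos_decr_1; lra.
  - rewrite <- (cos_neg x). apply cos_decr_1; lra.
Qed.

Lemma div_in_unit a b : 0 < b -> 0 <= a <= b -> 0 <= a / b <= 1.
Proof.
  intros Hb [H1 H2]. split.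
  - unfold Rdiv. apply Rmult_le_pos; [lra | left; apply Rinv_0_lt_compat; lra].
  - apply (Rmult_le_reg_r b); auto. unfold Rdiv. rewrite Rmult_assoc, Rinv_l by lra. lra.
Qed.

Lemma cross_neg_angle_lt a b r1 r2 : 0 < r1 -> 0 < r2 ->
  -(PI/2) <= a <= PI/2 -> -(PI/2) <= b <= PI/2 ->
  (r1 * cos a) * (r2 * sin b) - (r1 * sin a) * (r2 * cos b) < 0 -> b < a.
Proof.
  intros H1 H2 Ha Hb H. apply Rnot_le_lt. intro Hab.
  assert (E : (r1 * cos a) * (r2 * sin b) - (r1 * sin a) * (r2 * cos b) = r1 * r2 * sin (b - a))
    by (rewrite sin_minus; ring).
  assert (0 <= sin (b - a)) by (apply sin_ge_0; lra).
  assert (0 <= r1 * r2 * sin (b - a)) by (apply Rmult_le_pos; nra). lra.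
Qed.

(* g(x) = x - 2PI/3 (1 - cos x) vanishes at 0 and PI/3 and g' = 1 - 2PI/3 sin x
   is decreasing there, so g cannot dip below 0 in between. *)
Lemma one_sub_cos_le t : 0 <= t <= PI/3 -> 2*PI/3 * (1 - cos t) <= t.
Proof.
  intros [H0 H1]. pose proof PI_RGT_0.
  set (g := fun x => x - 2*PI/3 * (1 - cos x)).
  set (g' := fun x => 1 - 2*PI/3 * sin x).
  assert (Hd : forall x, derivable_pt_lim g x (g' x)).
  { intro x. unfold g, g'.
    change (fun x => x - 2*PI/3 * (1 - cos x))
      with (id - (fct_cte (2*PI/3) * (fct_cte 1 - cos)))%F.
    replace (1 - 2*PI/3 * sin x)
      with (1 - (0 * (1 - cos x) + 2*PI/3 * (0 - - sin x))) by ring.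
    apply derivable_pt_lim_minus; [apply derivable_pt_lim_id|].
    apply (derivable_pt_lim_mult (fct_cte (2*PI/3)) (fct_cte 1 - cos)%F);
      [apply derivable_pt_lim_const|].
    apply derivable_pt_lim_minus;
      [apply derivable_pt_lim_const | apply derivable_pt_lim_cos]. }
  destruct (Rle_dec (2*PI/3 * (1 - cos t)) t) as [ok|nok]; [exact ok|exfalso].
  assert (Hg : g t < 0) by (unfold g; lra).
  assert (g0 : g 0 = 0) by (unfold g; rewrite cos_0; ring).
  assert (g1 : g (PI/3) = 0) by (unfold g; rewrite cos_PI3; field).
  assert (t0 : 0 < t) by (destruct (Req_dec t 0) as [->|]; [rewrite g0 in Hg|]; lra).
  assert (t1 : t < PI/3) by (destruct (Req_dec t (PI/3)) as [->|]; [rewrite g1 in Hg|]; lra).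
  destruct (MVT_cor2 g g' 0 t t0 (fun x _ => Hd x)) as [x1 [E1 [x1a x1b]]].
  destruct (MVT_cor2 g g' t (PI/3) t1 (fun x _ => Hd x)) as [x2 [E2 [x2a x2b]]].
  assert (g' x1 < 0).
  { rewrite g0 in E1. destruct (Rle_dec 0 (g' x1)); [|lra].
    assert (0 <= g' x1 * (t - 0)) by (apply Rmult_le_pos; lra). lra. }
  assert (0 < g' x2).
  { rewrite g1 in E2. destruct (Rle_dec (g' x2) 0); [|lra].
    assert (0 <= - g' x2 * (PI/3 - t)) by (apply Rmult_le_pos; lra). lra. }
  assert (sin x1 < sin x2) by (apply sin_increasing_1; lra).
  unfold g' in *. nra.
Qed.

Lemma dist_nonneg a b : 0 <= dist a b.
Proof. apply sqrt_pos. Qed.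

Lemma dist_sq a b : dist a b ^ 2 = (fst a - fst b) ^ 2 + (snd a - snd b) ^ 2.
Proof.
  unfold dist. rewrite pow2_sqrt; [reflexivity|].
  pose proof (pow2_ge_0 (fst a - fst b)). pose proof (pow2_ge_0 (snd a - snd b)). lra.
Qed.

Lemma dist_refl a : dist a a = 0.
Proof. unfold dist. rewrite !Rminus_diag. replace (0 ^ 2 + 0 ^ 2) with 0 by ring. apply sqrt_0. Qed.

Lemma dist_comm a b : dist a b = dist b a.
Proof. unfold dist. f_equal. ring. Qed.

Lemma dist_le_0_eq a b : dist a b <= 0 -> a = b.
Proof.
  intros H. pose proof (dist_nonneg a b). pose proof (dist_sq a b).
  pose proof (pow2_ge_0 (fst a - fst b)). pose proof (pow2_ge_0 (snd a - snd b)).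
  rewrite (surjective_pairing a), (surjective_pairing b). f_equal; nra.
Qed.

Lemma subchain_length_cons c i n :
  subchain_length c i (S n) = dist (c i) (c (S i)) + subchain_length c (S i) n.
Proof.
  induction n as [|n IH].
  - cbn [subchain_length]. rewrite Nat.add_0_r, Nat.add_1_r. ring.
  - change (subchain_length c i (S (S n)))
      with (subchain_length c i (S n) + dist (c (i + S n)%nat) (c (i + S (S n))%nat)).
    rewrite IH. cbn [subchain_length].
    replace (i + S n)%nat with (S i + n)%nat by lia.
    replace (i + S (S n))%nat with (S i + S n)%nat by lia. ring.
Qed.

Lemma subchain_length_map (f : point -> point) (c : nat -> point) (D : R) i n :
  (forall a b, dist (f a) (f b) = dist a b / D) ->
  subchain_length (fun k => f (c k)) i n = subchain_length c i n / D.
Proof.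
  intros Hf. induction n as [|n IH]; cbn [subchain_length].
  - unfold Rdiv. ring.
  - rewrite IH, Hf. unfold Rdiv. ring.
Qed.

Lemma nonincreasing_bounds (u : nat -> R) n :
  (forall k, (k < n)%nat -> u (S k) <= u k) ->
  forall k, (k <= n)%nat -> u n <= u k <= u O.
Proof.
  intros Hdec k Hk. split.
  - assert (G : forall d, (d <= n - k)%nat -> u (k + d)%nat <= u k).
    { induction d as [|d IH]; intros Hd; [rewrite Nat.add_0_r; lra|].
      replace (k + S d)%nat with (S (k + d)) by lia.
      pose proof (Hdec (k + d)%nat ltac:(lia)). pose proof (IH ltac:(lia)). lra. }
    replace n with (k + (n - k))%nat at 1 by lia. apply G. lia.
  - induction k as [|k IH]; [lra|].
    pose proof (Hdec k ltac:(lia)). pose proof (IH ltac:(lia)). lra.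
Qed.

(** * Support functions and the gauge of a lune region *)

(* supp x y s is the projection of (x, y) on the unit vector e(s) = (cos s, sin s);
   supp y (- x) s <= 0 says that (x, y) lies clockwise of e(s). *)
Definition supp (x y s : R) : R := x * cos s + y * sin s.

Lemma supp_le_norm x y s : supp x y s <= sqrt (x ^ 2 + y ^ 2).
Proof.
  unfold supp. destruct (Rle_dec (x * cos s + y * sin s) 0) as [Hn|Hp].
  - pose proof (sqrt_pos (x ^ 2 + y ^ 2)). lra.
  - rewrite <- (sqrt_pow2 (x * cos s + y * sin s)) by lra.
    apply sqrt_le_1_alt.
    assert (E : (x * cos s + y * sin s) ^ 2 + (x * sin s - y * cos s) ^ 2
                = (x ^ 2 + y ^ 2) * (sin s ^ 2 + cos s ^ 2)) by ring.
    rewrite sin_cos_pow2 in E. pose proof (pow2_ge_0 (x * sin s - y * cos s)). lra.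
Qed.

Lemma supp_le_1 x y s : x ^ 2 + y ^ 2 <= 1 -> supp x y s <= 1.
Proof.
  intros H. pose proof (supp_le_norm x y s).
  pose proof (sqrt_le_1_alt _ _ H). rewrite sqrt_1 in *. lra.
Qed.

Lemma supp_le_dist a b s :
  supp (fst b - fst a) (snd b - snd a) s <= dist a b.
Proof.
  unfold dist. replace ((fst a - fst b) ^ 2 + (snd a - snd b) ^ 2)
    with ((fst b - fst a) ^ 2 + (snd b - snd a) ^ 2) by ring.
  apply supp_le_norm.
Qed.

Lemma supp_diff x y s1 s2 :
  supp x y s2 - supp x y s1 = 2 * sin ((s2 - s1) / 2) * supp y (- x) ((s1 + s2) / 2).
Proof.
  unfold supp.
  replace (x * cos s2 + y * sin s2 - (x * cos s1 + y * sin s1))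
    with (x * (cos s2 - cos s1) + y * (sin s2 - sin s1)) by ring.
  rewrite form2, form4.
  replace ((s2 + s1) / 2) with ((s1 + s2) / 2) by field.
  ring.
Qed.
Lemma supp_interp x y l s h :
  sin (h - l) * supp x y s = sin (h - s) * supp x y l + sin (s - l) * supp x y h.
Proof. unfold supp. rewrite !sin_minus. ring. Qed.

Definition dominated_on (g G : R -> R) (lo hi : R) : Prop :=
  forall s1 s2, lo <= s1 -> s1 <= s2 -> s2 <= hi -> g s2 - g s1 <= G s2 - G s1.

Lemma dominated_on_concat g G lo mid hi : lo <= mid -> mid <= hi ->
  dominated_on g G lo mid -> dominated_on g G mid hi -> dominated_on g G lo hi.
Proof.
  intros Hlm Hmh D1 D2 s1 s2 H1 H2 H3.
  destruct (Rle_dec s2 mid); [apply D1; lra|].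
  destruct (Rle_dec mid s1); [apply D2; lra|].
  pose proof (D1 s1 mid ltac:(lra) ltac:(lra) ltac:(lra)).
  pose proof (D2 mid s2 ltac:(lra) ltac:(lra) ltac:(lra)). lra.
Qed.

Lemma dominated_on_ext g G H lo hi :
  (forall s1 s2, lo <= s1 -> s1 <= s2 -> s2 <= hi -> G s2 - G s1 = H s2 - H s1) ->
  dominated_on g H lo hi -> dominated_on g G lo hi.
Proof. intros E D s1 s2 H1 H2 H3. rewrite E by lra. apply D; lra. Qed.

(* If x - a lies on the inner side of both normals at lo and hi, it does so at
   every angle in between, and then supp (x - a) is nonincreasing. *)
Lemma dominated_corner x y a b lo hi : lo <= hi < lo + PI ->
  supp (y - b) (a - x) lo <= 0 -> supp (y - b) (a - x) hi <= 0 ->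
  dominated_on (supp x y) (supp a b) lo hi.
Proof.
  intros Hlh Hlo Hhi s1 s2 H1 H2 H3. pose proof PI_RGT_0.
  assert (E : forall s, supp x y s - supp a b s = supp (x - a) (y - b) s)
    by (intro; unfold supp; ring).
  enough (supp (x - a) (y - b) s2 - supp (x - a) (y - b) s1 <= 0)
    by (rewrite <- !E in *; lra).
  rewrite supp_diff. set (mid := (s1 + s2) / 2).
  replace (- (x - a)) with (a - x) by ring.
  assert (0 <= sin ((s2 - s1) / 2)) by (apply sin_ge_0; lra).
  destruct (Req_dec hi lo) as [Heq|Hne].
  { replace ((s2 - s1) / 2) with 0 by lra. rewrite sin_0. lra. }
  assert (0 < sin (hi - lo)) by (apply sin_gt_0; lra).
  assert (0 <= sin (hi - mid)) by (apply sin_ge_0; unfold mid; lra).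
  assert (0 <= sin (mid - lo)) by (apply sin_ge_0; unfold mid; lra).
  pose proof (supp_interp (y - b) (a - x) lo mid hi).
  assert (sin (hi - lo) * supp (y - b) (a - x) mid <= 0) by nra.
  assert (supp (y - b) (a - x) mid <= 0) by nra.
  nra.
Qed.

Lemma dominated_arc x y a b lo hi : hi <= lo + PI ->
  (x - a) ^ 2 + (y - b) ^ 2 <= 1 ->
  dominated_on (supp x y) (fun s => supp a b s + s) lo hi.
Proof.
  intros Hlh Hd s1 s2 H1 H2 H3. pose proof PI_RGT_0.
  assert (E : forall s, supp x y s = supp a b s + supp (x - a) (y - b) s)
    by (intro; unfold supp; ring).
  rewrite !E. pose proof (supp_diff (x - a) (y - b) s1 s2) as D.
  assert (0 <= sin ((s2 - s1) / 2)) by (apply sin_ge_0; lra).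
  assert (sin ((s2 - s1) / 2) <= (s2 - s1) / 2) by (apply sin_le_id; lra).
  assert (supp (y - b) (- (x - a)) ((s1 + s2) / 2) <= 1)
    by (apply supp_le_1; nra).
  nra.
Qed.

Definition clamp (lo hi s : R) : R := Rmax lo (Rmin hi s).

Lemma clamp_in lo hi s : lo <= s <= hi -> clamp lo hi s = s.
Proof. intros. unfold clamp, Rmax, Rmin. repeat destruct Rle_dec; lra. Qed.

Lemma clamp_lo lo hi s : lo <= hi -> s <= lo -> clamp lo hi s = lo.
Proof. intros. unfold clamp, Rmax, Rmin. repeat destruct Rle_dec; lra. Qed.

Lemma clamp_hi lo hi s : lo <= hi -> hi <= s -> clamp lo hi s = hi.
Proof. intros. unfold clamp, Rmax, Rmin. repeat destruct Rle_dec; lra. Qed.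

Ltac simpl_clamp :=
  repeat first [ rewrite clamp_in by lra | rewrite clamp_lo by lra | rewrite clamp_hi by lra ].

Definition start_dir t := PI/2 - t/2.
Definition end_dir phb phy := (phb + phy)/2 - PI/2.
Definition tangent_a t := PI/2 - t.
Definition tangent_b phb := phb - PI/2.

Definition gauge_params t phb phy := 0 <= t <= PI/3 /\ 0 <= phy <= phb /\ phb <= PI/3.

Lemma gauge_params_order t phb phy : gauge_params t phb phy ->
  end_dir phb phy <= tangent_b phb /\ tangent_b phb <= -(PI/6) /\
  -(PI/6) <= PI/6 /\ PI/6 <= tangent_a t /\ tangent_a t <= start_dir t.
Proof.
  unfold gauge_params, end_dir, tangent_b, tangent_a, start_dir. pose proof PI_RGT_0. lra.
Qed.

(* The region cut out of the lune between p = (0,0) and (1,0) by the ray from p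
   at angle start_dir t, which meets the circle about (1,0) at
   a = (1 - cos t, sin t), and by the line through b = (cos phb, sin phb) of
   direction end_dir phb phy.  gauge integrates its boundary: corner a, arc
   about (1,0), apex (1/2, sqrt 3 / 2), arc about p, corner b; on an arc of a
   unit circle about z, supp z s + s bounds the support increments. *)
Definition in_region t phb phy x y :=
  x ^ 2 + y ^ 2 <= 1 /\ (x - 1) ^ 2 + y ^ 2 <= 1 /\
  supp y (- x) (start_dir t) <= 0 /\
  supp (y - sin phb) (cos phb - x) (end_dir phb phy) <= 0.

Definition gauge t phb phy s :=
  supp (cos phb) (sin phb) (clamp (end_dir phb phy) (tangent_b phb) s)
  + clamp (tangent_b phb) (-(PI/6)) s
  + supp (1/2) (sqrt 3 / 2) (clamp (-(PI/6)) (PI/6) s)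
  + (supp 1 0 (clamp (PI/6) (tangent_a t) s) + clamp (PI/6) (tangent_a t) s)
  + supp (1 - cos t) (sin t) (clamp (tangent_a t) (start_dir t) s).

Section GaugePieces.

Variables (t phb phy x y : R).
Hypothesis params : gauge_params t phb phy.
Hypothesis region : in_region t phb phy x y.

Lemma gauge_dominates_corner_a :
  dominated_on (supp x y) (gauge t phb phy) (tangent_a t) (start_dir t).
Proof.
  destruct region as [Hp [Hq [Ha Hb]]]. pose proof (gauge_params_order _ _ _ params) as O.
  apply dominated_on_ext with (supp (1 - cos t) (sin t)).
  { intros s1 s2 H1 H2 H3. unfold gauge. simpl_clamp. ring. }
  destruct params as [Ht _]. pose proof PI_RGT_0.
  apply dominated_corner.
  - unfold tangent_a, start_dir. lra.
  - assert (Hq' : (1 - x) ^ 2 + y ^ 2 <= 1) by lra.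
    pose proof (supp_le_1 (1 - x) y t Hq') as S.
    unfold supp, tangent_a in *. rewrite cos_shift, sin_shift. pose proof (sin_cos_pow2 t). nra.
  - assert (Z : supp (- sin t) (1 - cos t) (start_dir t) = 0).
    { unfold supp, start_dir. rewrite sin_shift, cos_shift.
      replace t with (2 * (t/2)) at 1 3 by field.
      rewrite cos_2a_sin, sin_2a. ring. }
    unfold supp in *. nra.
Qed.

Lemma gauge_dominates_arc_q :
  dominated_on (supp x y) (gauge t phb phy) (PI/6) (tangent_a t).
Proof.
  destruct region as [Hp [Hq _]]. pose proof (gauge_params_order _ _ _ params) as O.
  apply dominated_on_ext with (fun s => supp 1 0 s + s).
  { intros s1 s2 H1 H2 H3. unfold gauge. simpl_clamp. ring. }
  apply dominated_arc; [unfold tangent_a; destruct params; pose proof PI_RGT_0; lra | nra].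
Qed.

Lemma gauge_dominates_apex :
  dominated_on (supp x y) (gauge t phb phy) (-(PI/6)) (PI/6).
Proof.
  destruct region as [Hp [Hq _]]. pose proof (gauge_params_order _ _ _ params) as O.
  apply dominated_on_ext with (supp (1/2) (sqrt 3 / 2)).
  { intros s1 s2 H1 H2 H3. unfold gauge. simpl_clamp. ring. }
  pose proof PI_RGT_0. pose proof (supp_le_1 x y (PI/3) Hp) as S1.
  pose proof (supp_le_1 (1 - x) y (PI/3) ltac:(nra)) as S2.
  unfold supp in *. rewrite cos_PI3, sin_PI3 in *.
  assert (sqrt 3 * sqrt 3 = 3) by (apply sqrt_sqrt; lra).
  apply dominated_corner; [lra | |]; unfold supp;
    rewrite ?cos_neg, ?sin_neg, cos_PI6, sin_PI6; nra.
Qed.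

Lemma gauge_dominates_arc_p :
  dominated_on (supp x y) (gauge t phb phy) (tangent_b phb) (-(PI/6)).
Proof.
  destruct region as [Hp _]. pose proof (gauge_params_order _ _ _ params) as O.
  apply dominated_on_ext with (fun s => supp 0 0 s + s).
  { intros s1 s2 H1 H2 H3. unfold gauge, supp. simpl_clamp. ring. }
  apply dominated_arc; [unfold tangent_b; destruct params; pose proof PI_RGT_0; lra | nra].
Qed.

Lemma gauge_dominates_corner_b :
  dominated_on (supp x y) (gauge t phb phy) (end_dir phb phy) (tangent_b phb).
Proof.
  destruct region as [Hp [_ [_ Hb]]]. pose proof (gauge_params_order _ _ _ params) as O.
  apply dominated_on_ext with (supp (cos phb) (sin phb)).
  { intros s1 s2 H1 H2 H3. unfold gauge. simpl_clamp. ring. }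
  destruct params. pose proof PI_RGT_0.
  apply dominated_corner; [unfold end_dir, tangent_b; lra | exact Hb |].
  pose proof (supp_le_1 x y phb Hp). pose proof (sin_cos_pow2 phb).
  unfold supp, tangent_b in *.
  replace (phb - PI/2) with (- (PI/2 - phb)) by ring.
  rewrite cos_neg, sin_neg, cos_shift, sin_shift. nra.
Qed.

Lemma gauge_dominates :
  dominated_on (supp x y) (gauge t phb phy) (end_dir phb phy) (start_dir t).
Proof.
  pose proof (gauge_params_order _ _ _ params) as O.
  apply dominated_on_concat with (tangent_b phb); try lra.
  { exact gauge_dominates_corner_b. }
  apply dominated_on_concat with (-(PI/6)); try lra.
  { exact gauge_dominates_arc_p. }
  apply dominated_on_concat with (PI/6); try lra.
  { exact gauge_dominates_apex. }
  apply dominated_on_concat with (tangent_a t); try lra.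
  - exact gauge_dominates_arc_q.
  - exact gauge_dominates_corner_a.
Qed.

End GaugePieces.

Lemma gauge_total t phb phy : gauge_params t phb phy ->
  gauge t phb phy (start_dir t) - gauge t phb phy (end_dir phb phy)
  = supp (1 - cos t) (sin t) (start_dir t) - supp (cos phb) (sin phb) (end_dir phb phy)
    + 2*PI/3 - t - phb.
Proof.
  intros HP. pose proof (gauge_params_order _ _ _ HP) as O. unfold gauge. simpl_clamp.
  unfold supp, tangent_a, tangent_b.
  replace (phb - PI/2) with (- (PI/2 - phb)) by ring.
  rewrite !cos_neg, !sin_neg, !cos_shift, !sin_shift, !cos_PI6, !sin_PI6. field.
Qed.

(* Summation by parts: writing each edge length as the projection of the edge
   on its direction Th (S k), the length telescopes into support increments
   supp P_k (Th k) - supp P_k (Th (S k)) plus two boundary terms. *)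
Lemma subchain_length_le_gauge (P : nat -> point) (Th : nat -> R) (G : R -> R) n :
  (forall k, (k < n)%nat -> dist (P k) (P (S k))
     <= supp (fst (P (S k)) - fst (P k)) (snd (P (S k)) - snd (P k)) (Th (S k))) ->
  (forall k, (k <= n)%nat ->
     supp (fst (P k)) (snd (P k)) (Th k) - supp (fst (P k)) (snd (P k)) (Th (S k))
     <= G (Th k) - G (Th (S k))) ->
  subchain_length P 0 n
  <= G (Th O) - G (Th (S n)) - supp (fst (P O)) (snd (P O)) (Th O)
     + supp (fst (P n)) (snd (P n)) (Th (S n)).
Proof.
  intros Hedge Hdom.
  assert (Inv : forall k, (k <= n)%nat -> subchain_length P 0 k
            <= G (Th O) - G (Th k) - supp (fst (P O)) (snd (P O)) (Th O)
               + supp (fst (P k)) (snd (P k)) (Th k)).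
  { induction k as [|k IH]; intros Hk; cbn [subchain_length Nat.add]; [lra|].
    pose proof (IH ltac:(lia)). pose proof (Hedge k ltac:(lia)).
    pose proof (Hdom k ltac:(lia)). unfold supp in *. lra. }
  pose proof (Inv n (le_n n)). pose proof (Hdom n (le_n n)). lra.
Qed.

Lemma supp_corner_a_start t : supp (1 - cos t) (sin t) (start_dir t) = 2 * sin (t/2).
Proof.
  unfold supp, start_dir. rewrite cos_shift, sin_shift.
  replace t with (2 * (t/2)) at 1 3 by field.
  rewrite cos_2a_sin, sin_2a.
  transitivity (2 * sin (t/2) * (sin (t/2) ^ 2 + cos (t/2) ^ 2)); [ring|].
  rewrite sin_cos_pow2. ring.
Qed.

Lemma supp_chord_end phb phy :
  supp (cos phy) (sin phy) (end_dir phb phy) - supp (cos phb) (sin phb) (end_dir phb phy)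
  = 2 * sin ((phb - phy)/2).
Proof.
  unfold supp, end_dir. rewrite <- !cos_minus.
  replace (phy - ((phb + phy) / 2 - PI / 2)) with (PI/2 - (phb - phy)/2) by field.
  replace (phb - ((phb + phy) / 2 - PI / 2)) with (PI/2 - - ((phb - phy)/2)) by field.
  rewrite !cos_shift, sin_neg. ring.
Qed.

Lemma gauge_bound_le_stretch t phb phy lam mu :
  gauge_params t phb phy -> 0 <= lam <= 1 -> 0 <= mu <= 1 ->
  (1 - lam) * (2 * sin (t/2)) + 2*PI/3 - t - phb + (1 - mu) * (2 * sin ((phb - phy)/2))
  <= 2*PI/3 * ((1 - mu) * cos phy + mu * cos phb - lam * (1 - cos t)).
Proof.
  intros [Ht [Hphy Hphb]] Hlam Hmu. pose proof PI_RGT_0.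
  assert (2 * sin (t/2) <= t) by (pose proof (sin_le_id (t/2)); lra).
  assert (2 * sin ((phb - phy)/2) <= phb - phy) by (pose proof (sin_le_id ((phb - phy)/2)); lra).
  pose proof (one_sub_cos_le t Ht).
  pose proof (one_sub_cos_le phb ltac:(lra)).
  pose proof (one_sub_cos_le phy ltac:(lra)).
  assert (0 <= (1 - lam) * (t - 2 * sin (t/2))) by (apply Rmult_le_pos; lra).
  assert (0 <= (1 - mu) * (phb - phy - 2 * sin ((phb - phy)/2))) by (apply Rmult_le_pos; lra).
  assert (0 <= lam * (t - 2*PI/3 * (1 - cos t))) by (apply Rmult_le_pos; lra).
  assert (0 <= mu * (phb - 2*PI/3 * (1 - cos phb))) by (apply Rmult_le_pos; lra).
  assert (0 <= (1 - mu) * (phy - 2*PI/3 * (1 - cos phy))) by (apply Rmult_le_pos; lra).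
  nra.
Qed.

Lemma polyline_in_region_length (n : nat) (P : nat -> point) (Th : nat -> R)
    (t phb phy lam mu : R) :
  gauge_params t phb phy -> 0 <= lam <= 1 -> 0 <= mu <= 1 ->
  Th O = start_dir t -> Th (S n) = end_dir phb phy ->
  (forall k, (k <= n)%nat -> Th (S k) <= Th k) ->
  (forall k, (k < n)%nat -> dist (P k) (P (S k))
     <= supp (fst (P (S k)) - fst (P k)) (snd (P (S k)) - snd (P k)) (Th (S k))) ->
  (forall k, (k <= n)%nat -> in_region t phb phy (fst (P k)) (snd (P k))) ->
  P O = (lam * (1 - cos t), lam * sin t) ->
  P n = ((1 - mu) * cos phy + mu * cos phb, (1 - mu) * sin phy + mu * sin phb) ->
  subchain_length P 0 n <= 2*PI/3 * (fst (P n) - fst (P O)).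
Proof.
  intros HP Hlam Hmu T0 Tn Tdec Hedge Hreg P0 Pn.
  pose proof (nonincreasing_bounds Th (S n) ltac:(intros k Hk; apply Tdec; lia)) as Tb.
  pose proof (subchain_length_le_gauge P Th (gauge t phb phy) n Hedge) as L.
  assert (Hdom : forall k, (k <= n)%nat ->
     supp (fst (P k)) (snd (P k)) (Th k) - supp (fst (P k)) (snd (P k)) (Th (S k))
     <= gauge t phb phy (Th k) - gauge t phb phy (Th (S k))).
  { intros k Hk. pose proof (Tb k ltac:(lia)). pose proof (Tb (S k) ltac:(lia)).
    pose proof (Tdec k Hk).
    apply (gauge_dominates t phb phy _ _ HP (Hreg k Hk)); rewrite ?T0, ?Tn in *; lra. }
  specialize (L Hdom). rewrite T0, Tn, gauge_total in L by exact HP.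
  rewrite P0, Pn in *. cbn [fst snd] in *.
  assert (Sa : supp (lam * (1 - cos t)) (lam * sin t) (start_dir t) = lam * (2 * sin (t/2)))
    by (rewrite <- supp_corner_a_start; unfold supp; ring).
  assert (Sb : supp ((1 - mu) * cos phy + mu * cos phb) ((1 - mu) * sin phy + mu * sin phb)
                 (end_dir phb phy)
               = supp (cos phb) (sin phb) (end_dir phb phy) + (1 - mu) * (2 * sin ((phb - phy)/2)))
    by (rewrite <- supp_chord_end; unfold supp; ring).
  rewrite Sa, Sb, supp_corner_a_start in L.
  pose proof (gauge_bound_le_stretch t phb phy lam mu HP Hlam Hmu). lra.
Qed.

(** * Normal chains *)

Definition polar_angle (x y : R) : R := asin (y / sqrt (x ^ 2 + y ^ 2)).

Lemma polar_repr x y : 0 < x ->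
  0 < sqrt (x ^ 2 + y ^ 2) /\
  x = sqrt (x ^ 2 + y ^ 2) * cos (polar_angle x y) /\
  y = sqrt (x ^ 2 + y ^ 2) * sin (polar_angle x y) /\
  -(PI/2) < polar_angle x y < PI/2.
Proof.
  intros Hx. unfold polar_angle. set (r := sqrt (x ^ 2 + y ^ 2)).
  pose proof (pow2_ge_0 y).
  assert (Hr : 0 < r) by (apply sqrt_lt_R0; nra).
  assert (Rsq : r * r = x ^ 2 + y ^ 2) by (apply sqrt_sqrt; nra).
  assert (Bd : -1 < y / r < 1).
  { split; apply (Rmult_lt_reg_r r); auto; unfold Rdiv;
      rewrite Rmult_assoc, Rinv_l by lra; nra. }
  split; [lra | split; [| split]].
  - rewrite cos_asin by lra.
    assert (E : 1 - (y / r)² = (x / r) ^ 2) by (unfold Rsqr; field_simplify_eq; nra).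
    rewrite E, sqrt_pow2; [field; lra|].
    unfold Rdiv. apply Rmult_le_pos; [lra | left; apply Rinv_0_lt_compat; lra].
  - rewrite sin_asin by lra. field. lra.
  - apply asin_bound_lt. lra.
Qed.

Lemma polar_angle_pos x y : 0 < x -> 0 < y -> 0 < polar_angle x y.
Proof.
  intros Hx Hy. destruct (polar_repr x y Hx) as [Hr [_ [Ey Hb]]].
  destruct (Rle_dec (polar_angle x y) 0) as [Hn|]; [exfalso|lra].
  assert (sin (polar_angle x y) <= 0).
  { destruct (Req_dec (polar_angle x y) 0) as [->|]; [rewrite sin_0; lra|].
    left. apply sin_lt_0_var; lra. }
  nra.
Qed.

Record normal_chain (m : nat) (c : nat -> point) : Prop := {
  nc_size : (3 <= m)%nat;
  nc_first : c O = (0, 0);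
  nc_last : c (m - 1)%nat = (1, 0);
  nc_lune : forall k, (k < m)%nat ->
    fst (c k) ^ 2 + snd (c k) ^ 2 <= 1 /\ (fst (c k) - 1) ^ 2 + snd (c k) ^ 2 <= 1;
  nc_clockwise : forall i j k, (i < j)%nat -> (j < k)%nat -> (k < m)%nat ->
    orient (c i) (c j) (c k) < 0 }.

Definition edge_len (c : nat -> point) k := dist (c k) (c (S k)).
Definition edge_dir (c : nat -> point) k :=
  polar_angle (fst (c (S k)) - fst (c k)) (snd (c (S k)) - snd (c k)).

(* The endpoints p and q get the angle PI/2, for which the constraints that
   these angles impose on the chain are vacuous. *)
Definition angle_at_p (c : nat -> point) i :=
  if Nat.eq_dec i O then PI/2 else polar_angle (fst (c i)) (snd (c i)).
Definition angle_at_q (m : nat) (c : nat -> point) j :=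
  if Nat.eq_dec j (m - 1) then PI/2 else polar_angle (1 - fst (c j)) (snd (c j)).
Definition radius_at_p (c : nat -> point) i := sqrt (fst (c i) ^ 2 + snd (c i) ^ 2).
Definition radius_at_q (c : nat -> point) j := sqrt ((1 - fst (c j)) ^ 2 + snd (c j) ^ 2).

Section NormalChain.

Variables (m : nat) (c : nat -> point).
Hypothesis HN : normal_chain m c.

Lemma normal_chain_y_pos k : (0 < k)%nat -> (k < m - 1)%nat -> 0 < snd (c k).
Proof.
  intros H1 H2. pose proof (nc_clockwise _ _ HN O k (m - 1) H1 H2 ltac:(lia)) as O.
  unfold orient in O. rewrite (nc_first _ _ HN), (nc_last _ _ HN) in O. simpl in O. lra.
Qed.

Lemma normal_chain_y_nonneg k : (k < m)%nat -> 0 <= snd (c k).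
Proof.
  intros Hk. destruct (Nat.eq_dec k 0) as [->|K0].
  { rewrite (nc_first _ _ HN). simpl. lra. }
  destruct (Nat.eq_dec k (m - 1)) as [->|K1].
  { rewrite (nc_last _ _ HN). simpl. lra. }
  left. apply normal_chain_y_pos; lia.
Qed.

Lemma normal_chain_x_bounds k : (k < m)%nat -> 0 <= fst (c k) <= 1.
Proof.
  intros Hk. destruct (nc_lune _ _ HN k Hk). pose proof (pow2_ge_0 (snd (c k))). split; nra.
Qed.

Lemma normal_chain_x_pos k : (0 < k)%nat -> (k < m)%nat -> 0 < fst (c k).
Proof.
  intros H1 H2. destruct (Nat.eq_dec k (m - 1)) as [->|Hne].
  { rewrite (nc_last _ _ HN). simpl. lra. }
  pose proof (normal_chain_y_pos k H1 ltac:(lia)).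
  destruct (nc_lune _ _ HN k H2). nra.
Qed.

Lemma normal_chain_x_lt1 k : (k < m - 1)%nat -> fst (c k) < 1.
Proof.
  intros Hk. destruct k as [|k]; [rewrite (nc_first _ _ HN); simpl; lra|].
  pose proof (normal_chain_y_pos (S k) ltac:(lia) Hk).
  destruct (nc_lune _ _ HN (S k) ltac:(lia)). nra.
Qed.

(* Seen from p every vertex lies to the right of the next one, seen from q to
   the left; this forces every edge to move rightwards. *)
Lemma edge_dx_pos k : (S k < m)%nat -> 0 < fst (c (S k)) - fst (c k).
Proof.
  intros Hk. destruct k as [|k].
  { rewrite (nc_first _ _ HN). simpl. pose proof (normal_chain_x_pos 1 ltac:(lia) Hk). lra. }
  destruct (Nat.eq_dec (S (S k)) (m - 1)) as [Heq|Hne].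
  { rewrite Heq, (nc_last _ _ HN). simpl. pose proof (normal_chain_x_lt1 (S k) ltac:(lia)). lra. }
  pose proof (nc_clockwise _ _ HN O (S k) (S (S k)) ltac:(lia) ltac:(lia) ltac:(lia)) as O1.
  pose proof (nc_clockwise _ _ HN (S k) (S (S k)) (m - 1) ltac:(lia) ltac:(lia) ltac:(lia)) as O2.
  unfold orient in O1, O2. rewrite (nc_first _ _ HN) in O1. rewrite (nc_last _ _ HN) in O2.
  simpl in O1, O2.
  pose proof (normal_chain_x_pos (S k) ltac:(lia) ltac:(lia)).
  pose proof (normal_chain_y_pos (S k) ltac:(lia) ltac:(lia)).
  pose proof (normal_chain_x_lt1 (S (S k)) ltac:(lia)).
  pose proof (normal_chain_y_pos (S (S k)) ltac:(lia) ltac:(lia)).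
  destruct (Rle_dec (fst (c (S (S k))) - fst (c (S k))) 0) as [Hdx|]; [exfalso|lra].
  destruct (Rle_dec (snd (c (S (S k))) - snd (c (S k))) 0) as [Hdy|Hdy]; nra.
Qed.

Lemma edge_repr k : (S k < m)%nat ->
  0 < edge_len c k /\
  fst (c (S k)) = fst (c k) + edge_len c k * cos (edge_dir c k) /\
  snd (c (S k)) = snd (c k) + edge_len c k * sin (edge_dir c k) /\
  -(PI/2) < edge_dir c k < PI/2.
Proof.
  intros Hk. pose proof (edge_dx_pos k Hk) as Hx.
  assert (L : edge_len c k
               = sqrt ((fst (c (S k)) - fst (c k)) ^ 2 + (snd (c (S k)) - snd (c k)) ^ 2))
    by (unfold edge_len, dist; f_equal; ring).
  unfold edge_dir. rewrite L.
  destruct (polar_repr _ (snd (c (S k)) - snd (c k)) Hx) as [A [B [C D]]].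
  repeat split; lra.
Qed.

Lemma edge_dir_decreasing k : (S (S k) < m)%nat -> edge_dir c (S k) < edge_dir c k.
Proof.
  intros Hk. pose proof (nc_clockwise _ _ HN k (S k) (S (S k)) ltac:(lia) ltac:(lia) Hk) as O.
  destruct (edge_repr k ltac:(lia)) as [L1 [E1 [E2 R1]]].
  destruct (edge_repr (S k) Hk) as [L2 [E3 [E4 R2]]].
  unfold orient in O. rewrite E3, E4, E1, E2 in O.
  apply (cross_neg_angle_lt _ _ (edge_len c k) (edge_len c (S k))); try lra.
Qed.

Lemma edge_dir_antitone k l : (k <= l)%nat -> (S l < m)%nat -> edge_dir c l <= edge_dir c k.
Proof.
  intros Hkl Hl. induction l as [|l IH]; [replace k with O by lia; lra|].
  destruct (Nat.eq_dec k (S l)) as [->|Hne]; [lra|].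
  pose proof (edge_dir_decreasing l Hl). pose proof (IH ltac:(lia) ltac:(lia)). lra.
Qed.

Lemma angle_at_p_repr i : (0 < i)%nat -> (i < m - 1)%nat ->
  0 < radius_at_p c i /\
  fst (c i) = radius_at_p c i * cos (angle_at_p c i) /\
  snd (c i) = radius_at_p c i * sin (angle_at_p c i) /\
  0 < angle_at_p c i < PI/2.
Proof.
  intros H1 H2. unfold angle_at_p, radius_at_p. destruct (Nat.eq_dec i 0); [lia|].
  pose proof (normal_chain_x_pos i H1 ltac:(lia)) as Hx.
  pose proof (normal_chain_y_pos i H1 H2) as Hy.
  pose proof (polar_angle_pos _ _ Hx Hy). destruct (polar_repr _ (snd (c i)) Hx) as [A [B [C D]]].
  repeat split; lra.
Qed.

Lemma angle_at_q_repr j : (0 < j)%nat -> (j < m - 1)%nat ->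
  0 < radius_at_q c j /\
  fst (c j) = 1 - radius_at_q c j * cos (angle_at_q m c j) /\
  snd (c j) = radius_at_q c j * sin (angle_at_q m c j) /\
  0 < angle_at_q m c j < PI/2.
Proof.
  intros H1 H2. unfold angle_at_q, radius_at_q. destruct (Nat.eq_dec j (m - 1)); [lia|].
  assert (Hx : 0 < 1 - fst (c j)) by (pose proof (normal_chain_x_lt1 j H2); lra).
  pose proof (normal_chain_y_pos j H1 H2) as Hy.
  pose proof (polar_angle_pos _ _ Hx Hy). destruct (polar_repr _ (snd (c j)) Hx) as [A [B [C D]]].
  repeat split; lra.
Qed.

Lemma angle_at_p_range i : (i < m - 1)%nat -> 0 < angle_at_p c i <= PI/2.
Proof.
  intros Hi. destruct (Nat.eq_dec i 0) as [->|Hne].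
  - unfold angle_at_p. simpl. pose proof PI_RGT_0. lra.
  - destruct (angle_at_p_repr i ltac:(lia) Hi) as [_ [_ [_ P]]]. lra.
Qed.

Lemma angle_at_q_range j : (0 < j)%nat -> (j < m)%nat -> 0 < angle_at_q m c j <= PI/2.
Proof.
  intros H1 H2. destruct (Nat.eq_dec j (m - 1)) as [->|Hne].
  - unfold angle_at_q. destruct Nat.eq_dec; [|lia]. pose proof PI_RGT_0. lra.
  - destruct (angle_at_q_repr j H1 ltac:(lia)) as [_ [_ [_ P]]]. lra.
Qed.

Lemma edge_dir_le_angle_at_p i : (S i < m)%nat -> edge_dir c i <= angle_at_p c i.
Proof.
  intros Hi. destruct (edge_repr i Hi) as [L [E1 [E2 R]]].
  destruct (Nat.eq_dec i 0) as [->|Hne]; [unfold angle_at_p; simpl; lra|].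
  destruct (angle_at_p_repr i ltac:(lia) ltac:(lia)) as [Rp [Ux [Uy Pr]]].
  pose proof (nc_clockwise _ _ HN O i (S i) ltac:(lia) ltac:(lia) Hi) as O.
  unfold orient in O. rewrite (nc_first _ _ HN), E1, E2 in O. simpl in O. rewrite Ux, Uy in O.
  left. apply (cross_neg_angle_lt _ _ (radius_at_p c i) (edge_len c i)); lra.
Qed.

Lemma angle_at_q_le_edge_dir j : (0 < j)%nat -> (j < m)%nat ->
  - angle_at_q m c j <= edge_dir c (j - 1).
Proof.
  intros H1 H2. destruct (edge_repr (j - 1) ltac:(lia)) as [L [E1 [E2 R]]].
  replace (S (j - 1)) with j in E1, E2 by lia.
  destruct (Nat.eq_dec j (m - 1)) as [->|Hne].
  { unfold angle_at_q. destruct Nat.eq_dec; [lra | lia]. }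
  destruct (angle_at_q_repr j H1 ltac:(lia)) as [Rp [Vx [Vy Pr]]].
  pose proof (nc_clockwise _ _ HN (j - 1) j (m - 1) ltac:(lia) ltac:(lia) ltac:(lia)) as O.
  unfold orient in O. rewrite (nc_last _ _ HN) in O. simpl in O.
  assert (A1 : fst (c (j - 1)%nat)
                = fst (c j) - edge_len c (j - 1) * cos (edge_dir c (j - 1))) by lra.
  assert (A2 : snd (c (j - 1)%nat)
                = snd (c j) - edge_len c (j - 1) * sin (edge_dir c (j - 1))) by lra.
  rewrite A1, A2, Vx, Vy in O.
  left. apply (cross_neg_angle_lt _ _ (edge_len c (j - 1)) (radius_at_q c j)); try lra.
  rewrite cos_neg, sin_neg. nra.
Qed.

Lemma right_of_ray_p i k : (i <= k)%nat -> (k < m)%nat -> (S i < m)%nat ->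
  supp (snd (c k)) (- fst (c k)) (angle_at_p c i) <= 0.
Proof.
  intros Hik Hk Hi. unfold supp.
  destruct (Nat.eq_dec i 0) as [->|Hne].
  { unfold angle_at_p. simpl. rewrite sin_PI2, cos_PI2.
    pose proof (normal_chain_x_bounds k Hk). lra. }
  destruct (angle_at_p_repr i ltac:(lia) ltac:(lia)) as [Rp [Ux [Uy Pr]]].
  destruct (Nat.eq_dec k i) as [->|Hne']; [rewrite Ux, Uy at 1; nra|].
  pose proof (nc_clockwise _ _ HN O i k ltac:(lia) ltac:(lia) Hk) as O.
  unfold orient in O. rewrite (nc_first _ _ HN) in O. simpl in O. rewrite Ux, Uy in O.
  nra.
Qed.

Lemma left_of_ray_q j k : (k <= j)%nat -> (j < m)%nat -> (0 < j)%nat ->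
  supp (snd (c k) - snd (c j)) (fst (c k) - fst (c j)) (angle_at_q m c j) <= 0.
Proof.
  intros Hkj Hj Hj0. unfold supp.
  destruct (Nat.eq_dec j (m - 1)) as [->|Hne].
  { unfold angle_at_q. destruct Nat.eq_dec; [|lia].
    rewrite sin_PI2, cos_PI2, (nc_last _ _ HN). simpl.
    pose proof (normal_chain_x_bounds k ltac:(lia)). lra. }
  destruct (angle_at_q_repr j Hj0 ltac:(lia)) as [Rp [Vx [Vy Pr]]].
  destruct (Nat.eq_dec k j) as [->|Hne']; [nra|].
  pose proof (nc_clockwise _ _ HN k j (m - 1) ltac:(lia) ltac:(lia) ltac:(lia)) as O.
  unfold orient in O. rewrite (nc_last _ _ HN) in O. simpl in O. rewrite Vx, Vy in O |- *.
  nra.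
Qed.

End NormalChain.

(** * The cone case *)

Lemma subchain_length_le_projection (c : nat -> point) i n s kappa :
  (forall k, (k < n)%nat -> kappa * dist (c (i + k)%nat) (c (i + S k)%nat)
     <= supp (fst (c (i + S k)%nat) - fst (c (i + k)%nat))
             (snd (c (i + S k)%nat) - snd (c (i + k)%nat)) s) ->
  kappa * subchain_length c i n <= dist (c i) (c (i + n)%nat).
Proof.
  intros Hproj.
  enough (kappa * subchain_length c i n
          <= supp (fst (c (i + n)%nat) - fst (c i)) (snd (c (i + n)%nat) - snd (c i)) s)
    by (pose proof (supp_le_dist (c i) (c (i + n)%nat) s); lra).
  induction n as [|n IH]; cbn [subchain_length].
  - rewrite Nat.add_0_r. unfold supp. lra.
  - pose proof (IH ltac:(intros k Hk; apply Hproj; lia)).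
    pose proof (Hproj n ltac:(lia)). unfold supp in *. lra.
Qed.

(* All edge directions lie in [-psi, phi], so they are within PI/3 of the
   bisector and each edge projects onto it with at least half its length. *)
Lemma stretch_cone m c i j : normal_chain m c -> (i < j)%nat -> (j < m)%nat ->
  angle_at_p c i + angle_at_q m c j <= 2*PI/3 ->
  subchain_length c i (j - i) <= 2*PI/3 * dist (c i) (c j).
Proof.
  intros HN Hij Hj Hsum. pose proof PI_RGT_0. pose proof PI_gt_3.
  pose proof (angle_at_p_range m c HN i ltac:(lia)).
  pose proof (angle_at_q_range m c HN j ltac:(lia) Hj).
  assert (Hproj : forall k, (k < j - i)%nat -> 1/2 * dist (c (i + k)%nat) (c (i + S k)%nat)
     <= supp (fst (c (i + S k)%nat) - fst (c (i + k)%nat))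
             (snd (c (i + S k)%nat) - snd (c (i + k)%nat)) ((angle_at_p c i - angle_at_q m c j)/2)).
  { intros k Hk. replace (i + S k)%nat with (S (i + k)) by lia.
    destruct (edge_repr m c HN (i + k) ltac:(lia)) as [L [E1 [E2 _]]].
    pose proof (edge_dir_le_angle_at_p m c HN i ltac:(lia)).
    pose proof (edge_dir_antitone m c HN i (i + k) ltac:(lia) ltac:(lia)).
    pose proof (angle_at_q_le_edge_dir m c HN j ltac:(lia) Hj).
    pose proof (edge_dir_antitone m c HN (i + k) (j - 1) ltac:(lia) ltac:(lia)).
    pose proof (cos_ge_half (edge_dir c (i + k) - (angle_at_p c i - angle_at_q m c j)/2)
                  ltac:(lra)).
    unfold supp. rewrite E1, E2.
    replace (fst (c (i + k)%nat) + edge_len c (i + k) * cos (edge_dir c (i + k))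
             - fst (c (i + k)%nat)) with (edge_len c (i + k) * cos (edge_dir c (i + k))) by ring.
    replace (snd (c (i + k)%nat) + edge_len c (i + k) * sin (edge_dir c (i + k))
             - snd (c (i + k)%nat)) with (edge_len c (i + k) * sin (edge_dir c (i + k))) by ring.
    rewrite cos_minus in *. fold (edge_len c (i + k)). nra. }
  pose proof (subchain_length_le_projection c i (j - i) _ _ Hproj) as B.
  replace (i + (j - i))%nat with j in B by lia.
  assert (0 <= dist (c i) (c j)) by apply sqrt_pos. nra.
Qed.

(** * The sector case *)

Definition rotate (w : R) (z : point) : point :=
  (fst z * cos w + snd z * sin w, - fst z * sin w + snd z * cos w).

Lemma dist_rotate w a b : dist (rotate w a) (rotate w b) = dist a b.
Proof.
  unfold dist, rotate; simpl. f_equal.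
  transitivity (((fst a - fst b) ^ 2 + (snd a - snd b) ^ 2) * (sin w ^ 2 + cos w ^ 2)); [ring|].
  rewrite sin_cos_pow2. ring.
Qed.

Lemma supp_rotate_sub w a b s :
  supp (fst (rotate w b) - fst (rotate w a)) (snd (rotate w b) - snd (rotate w a)) s
  = supp (fst b - fst a) (snd b - snd a) (s + w).
Proof. unfold supp, rotate; simpl. rewrite cos_plus, sin_plus. ring. Qed.

Lemma supp_perp_rotate_sub w a b s :
  supp (snd (rotate w b) - snd (rotate w a)) (fst (rotate w a) - fst (rotate w b)) s
  = supp (snd b - snd a) (fst a - fst b) (s + w).
Proof. unfold supp, rotate; simpl. rewrite cos_plus, sin_plus. ring. Qed.

Lemma rotate_unit w a : rotate w (cos a, sin a) = (cos (a - w), sin (a - w)).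
Proof. unfold rotate; simpl. rewrite cos_minus, sin_minus. f_equal; ring. Qed.

Lemma subchain_length_shift_rotate c i n w :
  subchain_length (fun k => rotate w (c (i + k)%nat)) 0 n = subchain_length c i n.
Proof.
  induction n as [|n IH]; cbn [subchain_length Nat.add]; [reflexivity|].
  rewrite IH, dist_rotate. reflexivity.
Qed.

(* Rotating by -w maps the subchain from c i to c j into in_region t phb phy:
   the ray p c_i meets the unit circle about e(w) at a, the ray q c_j meets the
   unit circle about p at b = e(PI - 2 psi), and c i, c j divide the segments
   p a and q b in the ratios lam and mu. *)
Section Sector.

Variables (m : nat) (c : nat -> point) (i j : nat) (w : R).
Hypothesis HN : normal_chain m c.
Hypothesis Hij : (i < j)%nat.
Hypothesis Hj : (j < m)%nat.
Hypothesis Hw : w <= 0.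
Hypothesis Hphi : PI/3 <= angle_at_p c i - w <= PI/2.
Hypothesis Hphi_inner : (0 < i)%nat -> angle_at_p c i - w < PI/2.
Hypothesis Hpsi : PI - 2 * angle_at_q m c j - w <= PI/3.
Hypothesis Hdisk : forall k, (i <= k <= j)%nat ->
  (fst (c k) - cos w) ^ 2 + (snd (c k) - sin w) ^ 2 <= 1.

Let n := (j - i)%nat.
Let phi := angle_at_p c i.
Let psi := angle_at_q m c j.
Let t := PI - 2 * (phi - w).
Let phb := PI - 2 * psi - w.
Let phy := - w.
Let P k := rotate w (c (i + k)%nat).
Let dir k :=
  (if Nat.eq_dec k 0 then phi
   else if Compare_dec.le_lt_dec k n then edge_dir c (i + k - 1) else - psi) - w.
Let lam := if Nat.eq_dec i 0 then 0 else radius_at_p c i / (2 * cos (phi - w)).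
Let mu := if Nat.eq_dec j (m - 1) then 0 else radius_at_q c j / (2 * cos psi).

Lemma sector_params : gauge_params t phb phy.
Proof.
  pose proof PI_RGT_0. pose proof (angle_at_q_range m c HN j ltac:(lia) Hj).
  unfold gauge_params, t, phb, phy, phi, psi in *. lra.
Qed.

Lemma sector_dir_start : dir O = start_dir t.
Proof. unfold dir, start_dir, t. destruct (Nat.eq_dec 0 0); [field | lia]. Qed.

Lemma sector_dir_end : dir (S n) = end_dir phb phy.
Proof.
  unfold dir, end_dir, phb, phy. destruct (Nat.eq_dec (S n) 0); [lia|].
  destruct (Compare_dec.le_lt_dec (S n) n); [lia | field].
Qed.

Lemma sector_dir_inner k : (0 < k <= n)%nat -> dir k = edge_dir c (i + k - 1) - w.
Proof.
  intros Hk. unfold dir.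
  destruct (Nat.eq_dec k 0); [lia|]. destruct (Compare_dec.le_lt_dec k n); [reflexivity | lia].
Qed.

Lemma sector_dir_nonincreasing k : (k <= n)%nat -> dir (S k) <= dir k.
Proof.
  intros Hk. destruct (Nat.eq_dec k n) as [->|Hkn].
  - rewrite sector_dir_end, sector_dir_inner by (unfold n; lia).
    replace (i + n - 1)%nat with (j - 1)%nat by (unfold n; lia).
    pose proof (angle_at_q_le_edge_dir m c HN j ltac:(lia) Hj).
    unfold end_dir, phb, phy, psi. lra.
  - rewrite sector_dir_inner by lia. replace (i + S k - 1)%nat with (i + k)%nat by lia.
    destruct (Nat.eq_dec k 0) as [->|Hk0].
    + unfold dir. simpl. rewrite Nat.add_0_r.
      pose proof (edge_dir_le_angle_at_p m c HN i ltac:(lia)). unfold phi. lra.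
    + rewrite sector_dir_inner by lia.
      pose proof (edge_dir_antitone m c HN (i + k - 1) (i + k)
                    ltac:(lia) ltac:(unfold n in *; lia)).
      lra.
Qed.

Lemma sector_first : P O = (lam * (1 - cos t), lam * sin t) /\ 0 <= lam <= 1.
Proof.
  unfold P, lam, t. rewrite Nat.add_0_r. destruct (Nat.eq_dec i 0) as [->|Hi0].
  { rewrite (nc_first _ _ HN). unfold rotate; simpl. split; [f_equal; ring | lra]. }
  destruct (angle_at_p_repr m c HN i ltac:(lia) ltac:(lia)) as [Hr [Ex [Ey _]]].
  pose proof PI_RGT_0.
  assert (Hcos : 0 < cos (phi - w))
    by (apply cos_gt_0; unfold phi; specialize (Hphi_inner ltac:(lia)); lra).
  fold phi in Ex, Ey. rewrite (surjective_pairing (c i)), Ex, Ey.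
  split.
  - unfold rotate; simpl.
    rewrite Rtrigo_facts.cos_pi_minus, sin_PI_x, cos_2a_cos, sin_2a, cos_minus, sin_minus in *.
    f_equal; field; lra.
  - apply div_in_unit; [lra | split; [lra|]].
    pose proof (Hdisk i ltac:(lia)) as D. rewrite Ex, Ey in D. rewrite cos_minus in *.
    pose proof (sin_cos_pow2 phi). pose proof (sin_cos_pow2 w).
    assert (radius_at_p c i * (radius_at_p c i - 2 * (cos phi * cos w + sin phi * sin w)) <= 0)
      by nra.
    nra.
Qed.

Lemma sector_last :
  P n = ((1 - mu) * cos phy + mu * cos phb, (1 - mu) * sin phy + mu * sin phb) /\ 0 <= mu <= 1.
Proof.
  unfold P, mu, phb, phy. replace (i + n)%nat with j by (unfold n; lia).
  rewrite cos_neg, sin_neg.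
  destruct (Nat.eq_dec j (m - 1)) as [->|Hj1].
  { rewrite (nc_last _ _ HN). unfold rotate; simpl. split; [f_equal; ring | lra]. }
  destruct (angle_at_q_repr m c HN j ltac:(lia) ltac:(lia)) as [Hr [Ex [Ey Hpsi']]].
  pose proof PI_RGT_0.
  assert (Hcos : 0 < cos psi) by (apply cos_gt_0; unfold psi; lra).
  fold psi in Ex, Ey. rewrite (surjective_pairing (c j)), Ex, Ey.
  split.
  - unfold rotate; simpl.
    replace (PI - 2 * psi - w) with (PI - (2 * psi + w)) by ring.
    rewrite Rtrigo_facts.cos_pi_minus, sin_PI_x, cos_plus, sin_plus, cos_2a_cos, sin_2a.
    f_equal; field; lra.
  - apply div_in_unit; [lra | split; [lra|]].
    destruct (nc_lune _ _ HN j Hj) as [D _]. rewrite Ex, Ey in D.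
    pose proof (sin_cos_pow2 psi).
    assert (radius_at_q c j * (radius_at_q c j - 2 * cos psi) <= 0) by nra.
    nra.
Qed.

Lemma sector_edges k : (k < n)%nat ->
  dist (P k) (P (S k)) <= supp (fst (P (S k)) - fst (P k)) (snd (P (S k)) - snd (P k)) (dir (S k)).
Proof.
  intros Hk. unfold P. rewrite dist_rotate, supp_rotate_sub, sector_dir_inner by lia.
  replace (i + S k - 1)%nat with (i + k)%nat by lia.
  replace (i + S k)%nat with (S (i + k)) by lia.
  destruct (edge_repr m c HN (i + k) ltac:(unfold n in *; lia)) as [_ [E1 [E2 _]]].
  rewrite E1, E2. unfold supp. fold (edge_len c (i + k)).
  replace (edge_dir c (i + k) - w + w) with (edge_dir c (i + k)) by ring.
  right. transitivity
    (edge_len c (i + k) * (sin (edge_dir c (i + k)) ^ 2 + cos (edge_dir c (i + k)) ^ 2));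
    [rewrite sin_cos_pow2 | ]; ring.
Qed.

Lemma sector_chord :
  (fst (c j) - cos (PI - 2 * psi)) * sin psi + (snd (c j) - sin (PI - 2 * psi)) * cos psi = 0.
Proof.
  rewrite Rtrigo_facts.cos_pi_minus, sin_PI_x. replace (2 * psi) with (psi + psi) by ring.
  rewrite cos_plus, sin_plus.
  destruct (Nat.eq_dec j (m - 1)) as [Hj1|Hj1].
  - assert (Cj : c j = (1, 0)) by (rewrite Hj1; apply (nc_last _ _ HN)).
    unfold psi, angle_at_q. destruct (Nat.eq_dec j (m - 1)); [|lia].
    rewrite Cj, sin_PI2, cos_PI2. simpl. ring.
  - destruct (angle_at_q_repr m c HN j ltac:(lia) ltac:(lia)) as [_ [Ex [Ey _]]].
    fold psi in Ex, Ey. rewrite Ex, Ey.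
    transitivity (sin psi * (1 - (sin psi ^ 2 + cos psi ^ 2))); [ring|].
    rewrite sin_cos_pow2. ring.
Qed.

Lemma sector_region k : (k <= n)%nat -> in_region t phb phy (fst (P k)) (snd (P k)).
Proof.
  intros Hk. unfold in_region, P.
  destruct (nc_lune _ _ HN (i + k) ltac:(unfold n in *; lia)) as [L1 _].
  pose proof (Hdisk (i + k) ltac:(unfold n in *; lia)) as L2.
  pose proof (sin_cos_pow2 w).
  repeat split.
  - unfold rotate; simpl. nra.
  - unfold rotate; simpl. nra.
  - pose proof (supp_perp_rotate_sub w (0, 0) (c (i + k)%nat) (start_dir t)) as E.
    replace (start_dir t + w) with phi in E by (unfold start_dir, t; field).
    unfold rotate, supp in E |- *; simpl in E |- *.
    pose proof (right_of_ray_p m c HN i (i + k) ltac:(lia) ltac:(unfold n in *; lia) ltac:(lia)).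
    unfold supp, phi in *. nra.
  - set (b := (cos (PI - 2 * psi), sin (PI - 2 * psi))).
    assert (Eb : rotate w b = (cos phb, sin phb))
      by (unfold b; rewrite rotate_unit; f_equal; f_equal; unfold phb; ring).
    pose proof (supp_perp_rotate_sub w b (c (i + k)%nat) (end_dir phb phy)) as E.
    rewrite Eb in E. cbn [fst snd] in E.
    replace (end_dir phb phy + w) with (- psi) in E by (unfold end_dir, phb, phy; field).
    rewrite E. unfold supp, b. rewrite cos_neg, sin_neg, Rtrigo_facts.cos_pi_minus, sin_PI_x.
    pose proof (left_of_ray_q m c HN j (i + k) ltac:(unfold n in *; lia) Hj ltac:(lia)) as W.
    pose proof sector_chord as Chord.
    rewrite Rtrigo_facts.cos_pi_minus, sin_PI_x in Chord. unfold supp, psi in *. cbn [fst snd]. nra.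
Qed.

Lemma stretch_sector : subchain_length c i (j - i) <= 2*PI/3 * dist (c i) (c j).
Proof.
  destruct sector_first as [P0 Hlam]. destruct sector_last as [Pn Hmu].
  pose proof (polyline_in_region_length n P dir t phb phy lam mu sector_params Hlam Hmu
    sector_dir_start sector_dir_end sector_dir_nonincreasing sector_edges sector_region P0 Pn) as B.
  fold n. rewrite <- (subchain_length_shift_rotate c i n w). fold P.
  assert (fst (P n) - fst (P O) <= dist (c i) (c j)).
  { unfold P. rewrite Nat.add_0_r. replace (i + n)%nat with j by (unfold n; lia).
    pose proof (supp_le_dist (c i) (c j) w). unfold rotate, supp in *; simpl. lra. }
  pose proof PI_RGT_0. nra.
Qed.

End Sector.

Lemma sector_in_shifted_disk phi x y : 0 < phi < PI/3 ->
  x ^ 2 + y ^ 2 <= 1 -> 0 <= y -> supp y (- x) phi <= 0 ->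
  (x - cos (phi - PI/3)) ^ 2 + (y - sin (phi - PI/3)) ^ 2 <= 1.
Proof.
  intros Hphi H1 H2 H3. unfold supp in H3. pose proof PI_RGT_0.
  set (w := phi - PI/3).
  assert (Sp : 0 < sin phi) by (apply sin_gt_0; lra).
  set (be := y / sin phi). set (al := x - be * cos phi).
  assert (Yb : y = be * sin phi) by (unfold be; field; lra).
  assert (Bp : 0 <= be)
    by (unfold be, Rdiv; apply Rmult_le_pos; [lra | left; apply Rinv_0_lt_compat; lra]).
  assert (Ap : 0 <= al).
  { unfold al. apply (Rmult_le_reg_r (sin phi)); auto. rewrite Rmult_0_l.
    replace ((x - be * cos phi) * sin phi) with (x * sin phi - y * cos phi)
      by (rewrite Yb; ring).
    lra. }
  assert (Xa : x = al + be * cos phi) by (unfold al; ring).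
  assert (Cw : 1/2 <= cos w) by (apply cos_ge_half; unfold w; lra).
  assert (Cpw : cos (phi - w) = 1/2)
    by (unfold w; replace (phi - (phi - PI/3)) with (PI/3) by ring; apply cos_PI3).
  assert (Dot : x * cos w + y * sin w = al * cos w + be * cos (phi - w))
    by (rewrite Xa, Yb, cos_minus; ring).
  rewrite Cpw in Dot.
  assert (N2 : x ^ 2 + y ^ 2 <= (al + be) ^ 2).
  { rewrite Xa, Yb. pose proof (sin_cos_pow2 phi). pose proof (COS_bound phi).
    assert (0 <= al * be * (1 - cos phi)) by (apply Rmult_le_pos; [nra|lra]). nra. }
  assert (N3 : x ^ 2 + y ^ 2 <= al + be) by (destruct (Rle_dec 1 (al + be)); nra).
  assert (E : (x - cos w) ^ 2 + (y - sin w) ^ 2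
              = x ^ 2 + y ^ 2 - 2 * (x * cos w + y * sin w) + (sin w ^ 2 + cos w ^ 2)) by ring.
  rewrite sin_cos_pow2 in E. fold w. rewrite E.
  assert (al * cos w >= al * (1/2)) by (apply Rle_ge; apply Rmult_le_compat_l; lra).
  lra.
Qed.

Lemma stretch_normal_unless_small_angle_at_q m c i j :
  normal_chain m c -> (i < j)%nat -> (j < m)%nat ->
  ~ (angle_at_q m c j < PI/3 /\ PI/3 <= angle_at_p c i /\
     2*PI/3 < angle_at_p c i + angle_at_q m c j) ->
  subchain_length c i (j - i) <= 2*PI/3 * dist (c i) (c j).
Proof.
  intros HN Hij Hj Hsteep. pose proof PI_RGT_0.
  pose proof (angle_at_p_range m c HN i ltac:(lia)).
  pose proof (angle_at_q_range m c HN j ltac:(lia) Hj).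
  assert (Hinner : (0 < i)%nat -> angle_at_p c i < PI/2)
    by (intros; destruct (angle_at_p_repr m c HN i ltac:(lia) ltac:(lia)) as [_ [_ [_ P]]]; lra).
  destruct (Rle_dec (angle_at_p c i + angle_at_q m c j) (2*PI/3)) as [Hcone|Hcone].
  { apply (stretch_cone m); auto. }
  destruct (Rle_dec (PI/3) (angle_at_p c i)) as [Hp|Hp].
  - apply (stretch_sector m c i j 0); auto; try lra.
    + intros Hi. pose proof (Hinner Hi). lra.
    + intros k Hk. rewrite cos_0, sin_0. destruct (nc_lune _ _ HN k ltac:(lia)) as [_ L]. lra.
  - assert (Hi : (0 < i)%nat).
    { destruct (Nat.eq_dec i 0) as [->|]; [|lia]. unfold angle_at_p in Hp. simpl in Hp. lra. }
    apply (stretch_sector m c i j (angle_at_p c i - PI/3)); auto; try lra.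
    intros k Hk. destruct (nc_lune _ _ HN k ltac:(lia)) as [L _].
    apply sector_in_shifted_disk; [lra | exact L | apply (normal_chain_y_nonneg m c HN); lia |].
    apply (right_of_ray_p m c HN i k); lia.
Qed.

Definition mirror (m : nat) (c : nat -> point) : nat -> point :=
  fun k => (1 - fst (c (m - 1 - k)%nat), snd (c (m - 1 - k)%nat)).

Lemma normal_chain_mirror m c : normal_chain m c -> normal_chain m (mirror m c).
Proof.
  intros HN. unfold mirror. split.
  - exact (nc_size _ _ HN).
  - rewrite Nat.sub_0_r, (nc_last _ _ HN). simpl. f_equal; ring.
  - rewrite Nat.sub_diag, (nc_first _ _ HN). simpl. f_equal; ring.
  - intros k Hk. simpl. destruct (nc_lune _ _ HN (m - 1 - k) ltac:(lia)). split; nra.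
  - intros i j k Hij Hjk Hk.
    pose proof (nc_clockwise _ _ HN (m - 1 - k) (m - 1 - j) (m - 1 - i)
                  ltac:(lia) ltac:(lia) ltac:(lia)) as O.
    unfold orient in *. simpl. lra.
Qed.

Lemma angle_at_p_mirror m c j : (j < m)%nat ->
  angle_at_p (mirror m c) (m - 1 - j) = angle_at_q m c j.
Proof.
  intros Hj. unfold angle_at_p, angle_at_q, mirror.
  destruct (Nat.eq_dec (m - 1 - j) 0), (Nat.eq_dec j (m - 1)); try lia; [reflexivity|].
  replace (m - 1 - (m - 1 - j))%nat with j by lia. reflexivity.
Qed.

Lemma angle_at_q_mirror m c i : (i < m)%nat ->
  angle_at_q m (mirror m c) (m - 1 - i) = angle_at_p c i.
Proof.
  intros Hi. unfold angle_at_p, angle_at_q, mirror.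
  destruct (Nat.eq_dec (m - 1 - i) (m - 1)), (Nat.eq_dec i 0); try lia; [reflexivity|].
  replace (m - 1 - (m - 1 - i))%nat with i by lia. cbn [fst snd].
  replace (1 - (1 - fst (c i))) with (fst (c i)) by ring. reflexivity.
Qed.

Lemma dist_mirror m c a b :
  dist (mirror m c a) (mirror m c b) = dist (c (m - 1 - a)%nat) (c (m - 1 - b)%nat).
Proof. unfold dist, mirror; simpl. f_equal. ring. Qed.

Lemma subchain_length_mirror m c i n : (i + n < m)%nat ->
  subchain_length (mirror m c) (m - 1 - (i + n)) n = subchain_length c i n.
Proof.
  revert i. induction n as [|n IH]; intros i Hin; [reflexivity|].
  rewrite (subchain_length_cons c i n). cbn [subchain_length].
  rewrite <- (IH (S i)) by lia.
  replace (m - 1 - (i + S n))%nat with (m - 1 - (S i + n))%nat by lia.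
  rewrite dist_mirror, dist_comm.
  replace (m - 1 - (m - 1 - (S i + n) + n))%nat with (S i) by lia.
  replace (m - 1 - (m - 1 - (S i + n) + S n))%nat with i by lia.
  ring.
Qed.

(* Exchanging p and q turns the excluded case into the case
   angle_at_p < PI/3. *)
Lemma stretch_normal m c i j : normal_chain m c -> (i < j)%nat -> (j < m)%nat ->
  subchain_length c i (j - i) <= 2*PI/3 * dist (c i) (c j).
Proof.
  intros HN Hij Hj.
  destruct (Rlt_dec (angle_at_q m c j) (PI/3)) as [A|A];
  [destruct (Rle_dec (PI/3) (angle_at_p c i)) as [B|B];
   [destruct (Rlt_dec (2*PI/3) (angle_at_p c i + angle_at_q m c j)) as [C|C]|]|].
  2-4: apply (stretch_normal_unless_small_angle_at_q m); auto; lra.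
  rewrite <- (subchain_length_mirror m c i (j - i)) by lia.
  replace (i + (j - i))%nat with j by lia.
  replace (dist (c i) (c j)) with (dist (mirror m c (m - 1 - j)) (mirror m c (m - 1 - i))).
  2:{ rewrite dist_mirror, dist_comm. f_equal; f_equal; lia. }
  replace (j - i)%nat with ((m - 1 - i) - (m - 1 - j))%nat at 1 by lia.
  apply (stretch_normal_unless_small_angle_at_q m); [apply normal_chain_mirror; auto | lia | lia |].
  rewrite angle_at_p_mirror, angle_at_q_mirror by lia. lra.
Qed.

(** * Normalization *)

Lemma chain_in_lune_vertex m c k : (2 <= m)%nat -> chain_in_lune m c -> (k < m)%nat ->
  in_lune (c O) (c (m - 1)%nat) (c k).
Proof.
  intros Hm HL Hk.
  assert (At0 : forall a b : point, ((1 - 0) * fst a + 0 * fst b, (1 - 0) * snd a + 0 * snd b) = a)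
    by (intros [] []; simpl; f_equal; ring).
  assert (At1 : forall a b : point, ((1 - 1) * fst a + 1 * fst b, (1 - 1) * snd a + 1 * snd b) = b)
    by (intros [] []; simpl; f_equal; ring).
  destruct (Nat.eq_dec k (m - 1)) as [->|Hne].
  - pose proof (HL (m - 2)%nat 1 ltac:(lia) ltac:(lra)) as H.
    rewrite At1 in H. replace (S (m - 2)) with (m - 1)%nat in H by lia. exact H.
  - pose proof (HL k 0 ltac:(lia) ltac:(lra)) as H. rewrite At0 in H. exact H.
Qed.

Lemma subchain_length_collapsed m c i n : chain_in_lune m c ->
  dist (c O) (c (m - 1)%nat) = 0 -> (i + n < m)%nat -> subchain_length c i n = 0.
Proof.
  intros HL HD Hin.
  assert (Hc : forall k, (k < m)%nat -> c k = c O).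
  { intros k Hk. destruct (Nat.eq_dec k 0) as [->|Hk0]; [reflexivity|].
    apply dist_le_0_eq. destruct (chain_in_lune_vertex m c k ltac:(lia) HL Hk). lra. }
  induction n as [|n IH]; cbn [subchain_length]; [reflexivity|].
  rewrite IH by lia. rewrite (Hc (i + n)%nat), (Hc (i + S n)%nat) by lia.
  rewrite dist_refl. ring.
Qed.

(* Translate p to the origin, rotate q onto the positive x-axis, scale by
   1/|pq|, and reflect (s = -1) if the chain turns counterclockwise. *)
Definition similarity (p : point) (a b D s : R) (z : point) : point :=
  ((a * (fst z - fst p) + b * (snd z - snd p)) / D,
   s * (- b * (fst z - fst p) + a * (snd z - snd p)) / D).

Lemma dist_similarity p a b D s z z' : 0 < D -> a ^ 2 + b ^ 2 = 1 -> s * s = 1 ->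
  dist (similarity p a b D s z) (similarity p a b D s z') = dist z z' / D.
Proof.
  intros HD Hab Hs. unfold dist, similarity. cbn [fst snd].
  set (u := fst z - fst z'). set (v := snd z - snd z').
  replace (((a * (fst z - fst p) + b * (snd z - snd p)) / D
            - (a * (fst z' - fst p) + b * (snd z' - snd p)) / D) ^ 2
           + (s * (- b * (fst z - fst p) + a * (snd z - snd p)) / D
              - s * (- b * (fst z' - fst p) + a * (snd z' - snd p)) / D) ^ 2)
    with (((a * u + b * v) ^ 2 + (s * s) * (- b * u + a * v) ^ 2) / D ^ 2)
    by (unfold u, v; field; lra).
  rewrite Hs. replace ((a * u + b * v) ^ 2 + 1 * (- b * u + a * v) ^ 2)
    with ((u ^ 2 + v ^ 2) * (a ^ 2 + b ^ 2)) by ring.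
  rewrite Hab, Rmult_1_r, sqrt_div_alt, sqrt_pow2 by (try apply pow_lt; lra).
  reflexivity.
Qed.

Lemma orient_similarity p a b D s z1 z2 z3 : 0 < D -> a ^ 2 + b ^ 2 = 1 ->
  orient (similarity p a b D s z1) (similarity p a b D s z2) (similarity p a b D s z3)
  = s * orient z1 z2 z3 / (D * D).
Proof.
  intros HD Hab. unfold orient, similarity. cbn [fst snd].
  transitivity (s * (a ^ 2 + b ^ 2)
    * ((fst z2 - fst z1) * (snd z3 - snd z1) - (snd z2 - snd z1) * (fst z3 - fst z1)) / (D * D)).
  - field. lra.
  - rewrite Hab. field. lra.
Qed.

Section Normalize.

Variables (p q : point) (s : R).
Let D := dist p q.
Hypothesis HD : 0 < D.
Hypothesis Hs : s * s = 1.

Let a := (fst q - fst p) / D.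
Let b := (snd q - snd p) / D.
Let f := similarity p a b D s.

Lemma unit_direction : a ^ 2 + b ^ 2 = 1.
Proof.
  pose proof (dist_sq p q) as E. fold D in E.
  unfold a, b. replace (((fst q - fst p) / D) ^ 2 + ((snd q - snd p) / D) ^ 2)
    with (((fst p - fst q) ^ 2 + (snd p - snd q) ^ 2) / D ^ 2) by (field; lra).
  rewrite <- E. field. lra.
Qed.

Lemma dist_normalize z z' : dist (f z) (f z') = dist z z' / D.
Proof. apply dist_similarity; auto using unit_direction. Qed.

Lemma normalize_p : f p = (0, 0).
Proof. unfold f, similarity. f_equal; field; lra. Qed.

Lemma normalize_q : f q = (1, 0).
Proof.
  pose proof unit_direction as U. unfold f, similarity, a, b in *.
  f_equal; field_simplify; try lra. rewrite <- U. field. lra.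
Qed.

Lemma normalize_lune z : in_lune p q z ->
  fst (f z) ^ 2 + snd (f z) ^ 2 <= 1 /\ (fst (f z) - 1) ^ 2 + snd (f z) ^ 2 <= 1.
Proof.
  intros [Lp Lq].
  assert (Hunit : forall u, dist z u <= D -> dist (f z) (f u) <= 1).
  { intros u Hu. rewrite dist_normalize.
    apply div_in_unit; [lra | split; [apply dist_nonneg | lra]]. }
  pose proof (Hunit p Lp) as F1. pose proof (Hunit q Lq) as F2.
  rewrite normalize_p in F1. rewrite normalize_q in F2.
  pose proof (dist_sq (f z) (0, 0)) as S1. pose proof (dist_sq (f z) (1, 0)) as S2.
  cbn [fst snd] in S1, S2.
  pose proof (dist_nonneg (f z) (0, 0)). pose proof (dist_nonneg (f z) (1, 0)).
  split; nra.
Qed.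

Lemma orient_normalize z1 z2 z3 : orient (f z1) (f z2) (f z3) = s * orient z1 z2 z3 / (D * D).
Proof. apply orient_similarity; auto using unit_direction. Qed.

End Normalize.

Lemma normal_chain_normalize m c : convex_chain m c -> chain_in_lune m c -> (3 <= m)%nat ->
  0 < dist (c O) (c (m - 1)%nat) ->
  exists f : point -> point,
    (forall z z', dist (f z) (f z') = dist z z' / dist (c O) (c (m - 1)%nat)) /\
    normal_chain m (fun k => f (c k)).
Proof.
  intros Hconv HL Hm HD.
  assert (Hs : exists s, s * s = 1 /\ forall i j k, (i < j)%nat -> (j < k)%nat -> (k < m)%nat ->
                 s * orient (c i) (c j) (c k) < 0).
  { destruct Hconv as [Hc|Hc]; [exists (-1) | exists 1]; split; try ring;
      intros i j k H1 H2 H3; pose proof (Hc i j k H1 H2 H3); lra. }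
  destruct Hs as [s [Hs1 Hs2]].
  set (p := c O) in *. set (q := c (m - 1)%nat) in *.
  set (a := (fst q - fst p) / dist p q). set (b := (snd q - snd p) / dist p q).
  exists (similarity p a b (dist p q) s). split; [exact (dist_normalize p q s HD Hs1)|].
  split; [exact Hm | exact (normalize_p p q s HD) | exact (normalize_q p q s HD) | |].
  - intros k Hk. apply (normalize_lune p q s HD Hs1).
    apply chain_in_lune_vertex; auto; lia.
  - intros i j k H1 H2 H3. rewrite (orient_normalize p q s HD).
    pose proof (Hs2 i j k H1 H2 H3).
    assert (0 < / (dist p q * dist p q)) by (apply Rinv_0_lt_compat; nra).
    unfold Rdiv. nra.
Qed.

Theorem theorem4 (m : nat) (c : nat -> point) :
  convex_chain m c ->
  chain_in_lune m c ->
  stretch_at_most m c (2 * PI / 3).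
Proof.
  intros Hconv HL i j Hij Hj. pose proof PI_RGT_0.
  assert (Hnonneg : 0 <= 2 * PI / 3 * dist (c i) (c j))
    by (apply Rmult_le_pos; [lra | apply dist_nonneg]).
  destruct (Nat.eq_dec i j) as [<-|Hne]; [rewrite Nat.sub_diag; exact Hnonneg|].
  destruct (Req_dec (dist (c O) (c (m - 1)%nat)) 0) as [HD|HD].
  { rewrite (subchain_length_collapsed m c i (j - i)) by (auto; lia). exact Hnonneg. }
  pose proof (dist_nonneg (c O) (c (m - 1)%nat)).
  destruct (Compare_dec.le_lt_dec 3 m) as [Hm|Hm].
  - destruct (normal_chain_normalize m c Hconv HL Hm ltac:(lra)) as [f [Hf HN]].
    pose proof (stretch_normal m _ i j HN ltac:(lia) Hj) as B.
    rewrite (subchain_length_map f c _ i (j - i) Hf), Hf in B.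
    unfold Rdiv in B. apply Rmult_le_reg_r with (/ dist (c O) (c (m - 1)%nat));
      [apply Rinv_0_lt_compat; lra | lra].
  - assert (i = O /\ j = 1%nat) as [-> ->] by lia. cbn.
    pose proof PI_gt_3. pose proof (dist_nonneg (c O) (c 1%nat)). nra.
Qed.
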